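(* Let $m$ be an even positive integer, $q=2^m$, and let $\{u_1,u_2,u_3,u_4\}$ be a $4$-element subset of $U_{q+1}$. Let $M_4$ be the $4\times4$ matrix whose $j$-th column is $(u_j^{-5},u_j^{-3},u_j^{3},u_j^{5})^T$. Then $\mathrm{rank}(M_4)=3$ if and only if $\sigma_{4,2}^2+\sigma_{4,1}\sigma_{4,3}=0$, where $\sigma_{4,\ell}=\sigma_{4,\ell}(u_1,u_2,u_3,u_4)$.
   Context: $U_{q+1}$ denotes the set of $(q+1)$-th roots of unity in $\mathrm{GF}(q^2)$; ranks are over $\mathrm{GF}(q^2)$. $\sigma_{k,\ell}(u_1,\dots,u_k)=\sum_{I\subseteq\{1,\dots,k\},|I|=\ell}\prod_{j\in I}u_j$ is the elementary symmetric polynomial of degree $\ell$ in $k$ variables. *)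

From mathcomp Require Import all_boot all_order all_algebra all_field.
Set Implicit Arguments. Unset Strict Implicit. Unset Printing Implicit Defensive.
Import GRing.Theory.
Local Open Scope ring_scope.

Definition elsym (F : comNzRingType) (k l : nat) (u : 'I_k -> F) : F :=
  \sum_(I : {set 'I_k} | #|I| == l) \prod_(j in I) u j.

Definition exps : 'I_4 -> int := fun i =>
  match val i with 0 => (-5)%R | 1 => (-3)%R | 2 => 3%R | _ => 5%R end.

Definition M4 (F : fieldType) (u : 'I_4 -> F) : 'M[F]_4 :=
  \matrix_(i < 4, j < 4) (u j) ^ (exps i).

From mathcomp Require Import all_boot all_order all_algebra all_field.
From mathcomp Require Import ring.
Set Implicit Arguments. Unset Strict Implicit. Unset Printing Implicit Defensive.
Import GRing.Theory.
Local Open Scope ring_scope.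

(* Multiplying column j of M4 by u_j^5 gives the column (1, x_j, x_j^4, x_j^5) with
   x_j = u_j^2.  Reducing X^4 and X^5 modulo Q = prod_j (X - x_j) factors this
   matrix as C V, with V the invertible Vandermonde matrix of the x_j and
   C = [[1, 0], [*, B]] in 2 x 2 blocks, so rank M4 = 2 + rank B, where
   det B = q_2^2 - q_1 q_3 in terms of the coefficients q_k of Q.  In characteristic 2
   distinct x_j have distinct fourth powers, which forces B <> 0; hence rank M4 = 3
   iff det B = 0.  Finally Q is the Frobenius image of prod_j (X - u_j), whose
   coefficients are the signed sigma_k, and this turns det B into
   (sigma_2^2 + sigma_1 sigma_3)^2. *)

Section MatrixRank.
Variable F : fieldType.

Lemma det_mx22 (A : 'M[F]_2) : \det A = A 0 0 * A 1 1 - A 0 1 * A 1 0.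
Proof.
rewrite (expand_det_row _ 0) !big_ord_recl big_ord0 /cofactor !det_mx11 !mxE /=.
rewrite addr0 expr0 expr1 mul1r mulN1r mulrN.
by congr (A _ _ * A _ _ - A _ _ * A _ _); apply: val_inj.
Qed.

Lemma mxrank22_eq1 (A : 'M[F]_2) : (\rank A == 1%N) = (A != 0) && (\det A == 0).
Proof.
have : (\rank A <= 2)%N := rank_leq_row A.
rewrite -mxrank_eq0 -[\det A == 0]negbK -unitfE -unitmxE -row_free_unit /row_free.
by case: (\rank A) => [|[|[|]]].
Qed.

Lemma mxrank_block_unitriangular m n (A : 'M[F]_(m + n)) :
  ulsubmx A = 1%:M -> ursubmx A = 0 -> \rank A = (m + \rank (drsubmx A))%N.
Proof.
move=> Aul1 Aur0; rewrite -[A]submxK Aul1 Aur0 block_mxKdr.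
have -> : block_mx 1%:M 0 (dlsubmx A) (drsubmx A)
    = block_mx 1%:M 0 (dlsubmx A) 1%:M *m block_mx 1%:M 0 0 (drsubmx A).
  by rewrite mulmx_block !(mulmx1, mul1mx, mulmx0, mul0mx, addr0, add0r).
rewrite eqmxMfull; first by rewrite rank_diag_block_mx mxrank1.
by rewrite row_full_unit unitmxE det_lblock !det1 mulr1 unitr1.
Qed.

Lemma Vandermonde_unit n (x : 'I_n -> F) :
  injective x -> Vandermonde n (\row_j x j) \in unitmx.
Proof.
move=> x_inj; rewrite unitmxE det_Vandermonde unitfE.
apply/prodf_neq0 => i _; apply/prodf_neq0 => j lt_ij; rewrite !mxE subr_eq0.
by apply: contraTneq lt_ij => /x_inj ->; rewrite ltnn.
Qed.
End MatrixRank.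

Lemma coef_prod_XsubC_elsym (R : comNzRingType) n (u : 'I_n -> R) k : (k <= n)%N ->
  (\prod_(j < n) ('X - (u j)%:P))`_k = (-1) ^+ (n - k) * elsym (n - k) u.
Proof.
move=> le_kn; have := @coef_prod_XsubC _ [seq u j | j <- enum 'I_n] k.
rewrite size_map size_enum_ord big_map big_enum => -> //.
congr (_ * _); apply: eq_bigr => I _; apply: eq_bigr => i _.
by rewrite (nth_map i) ?size_enum_ord // nth_ord_enum.
Qed.

Lemma size_prod_XsubC_ord (R : nzRingType) n (x : 'I_n -> R) :
  size (\prod_j ('X - (x j)%:P)) = n.+1.
Proof. by rewrite size_prod_XsubC [index_enum _]unlock -enumT -cardT card_ord. Qed.

Lemma root_prod_XsubC_ord (R : idomainType) n (x : 'I_n -> R) j :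
  root (\prod_j ('X - (x j)%:P)) (x j).
Proof. by rewrite (bigD1 j) //= rootM root_XsubC eqxx. Qed.

Section PolyRemainder.
Variable F : fieldType.

Lemma horner_modp_root (p Q : {poly F}) x : root Q x -> (p %% Q).[x] = p.[x].
Proof.
by move=> /rootP Qx0; rewrite [in RHS](divp_eq p Q) hornerD hornerM Qx0 mulr0 add0r.
Qed.

Definition rem_coef_mx m n (Q : {poly F}) (d : 'I_m -> nat) : 'M[F]_(m, n) :=
  \matrix_(i, k) ('X^(d i) %% Q)`_k.

Lemma pow_mx_rem_Vandermonde m n (Q : {poly F}) (d : 'I_m -> nat) (x : 'I_n -> F) :
  size Q = n.+1 -> (forall j, root Q (x j)) ->
  \matrix_(i, j) x j ^+ d i = rem_coef_mx n Q d *m Vandermonde n (\row_j x j).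
Proof.
move=> Qsize Qx; apply/matrixP => i j; rewrite !mxE.
rewrite -hornerXn -(horner_modp_root _ (Qx j)) (horner_coef_wide (n := n)).
  by apply: eq_bigr => k _; rewrite !mxE.
by rewrite -ltnS -Qsize ltn_modp -size_poly_gt0 Qsize.
Qed.

Lemma modp_subM_small (p r Q : {poly F}) :
  (size (p - r * Q)%R < size Q)%N -> p %% Q = p - r * Q.
Proof. by move=> small; rewrite -{1}(subrK (r * Q) p) addrC modp_addl_mul_small. Qed.
End PolyRemainder.

Lemma sqr_inj_pchar2 (F : fieldType) :
  2%N \in [pchar F] -> injective (fun x : F => x ^+ 2).
Proof. by move=> ch2 x y; rewrite -!(pFrobenius_autE ch2); apply: fmorph_inj. Qed.

Definition M4_degrees (i : 'I_4) : nat := nth 0%N [:: 0; 1; 4; 5]%N i.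

Section QuarticRemainder.
Variables (F : fieldType) (Q : {poly F}).
Hypotheses (Qmonic : Q \is monic) (Qsize : size Q = 5%N).

Let Q4 : Q`_4 = 1. Proof. by rewrite -(monicP Qmonic) lead_coefE Qsize. Qed.
Let Q_high k : (4 < k)%N -> Q`_k = 0.
Proof. by move=> lt4k; rewrite nth_default // Qsize. Qed.

Let size_X4_subQ : (size ('X^4 - Q)%R <= 4)%N.
Proof.
apply/leq_sizeP => k; rewrite coefB coefXn leq_eqVlt => /predU1P[<- | lt4k].
  by rewrite Q4 subrr.
by rewrite Q_high // gtn_eqF // subrr.
Qed.

Lemma modp_X4_quartic : 'X^4 %% Q = 'X^4 - Q.
Proof. by rewrite -[Q in RHS]mul1r; apply: modp_subM_small; rewrite mul1r Qsize. Qed.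

Lemma modp_X5_quartic : 'X^5 %% Q = 'X^5 - ('X - (Q`_3)%:P) * Q.
Proof.
apply: modp_subM_small; rewrite Qsize; apply/leq_sizeP => -[|[|[|[|[|[|k]]]]]] // _.
all: rewrite mulrBl !coefB coefXn coefXM coefCM /=.
- by rewrite Q4 mulr1 !subrr.
- by rewrite Q4 (Q_high (k := 5)) // mulr0 subr0 subrr.
- by rewrite [Q`_k.+1.+4]Q_high // [Q`_k.+2.+4]Q_high // mulr0 subrr subr0.
Qed.

Lemma quartic_root_X4 y : root Q y -> y ^+ 4 = - \sum_(k < 4) Q`_k * y ^+ k.
Proof.
move=> /rootP Qy0.
have -> : y ^+ 4 = ('X^4 - Q).[y] by rewrite hornerD hornerN Qy0 subr0 hornerXn.
rewrite (horner_coef_wide _ size_X4_subQ) -sumrN; apply: eq_bigr => k _.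
by rewrite coefB coefXn ltn_eqF // sub0r mulNr.
Qed.

Definition quartic_rem_mx : 'M[F]_(2 + 2) := rem_coef_mx (2 + 2) Q M4_degrees.

Lemma quartic_rem_mx_ul : ulsubmx quartic_rem_mx = 1%:M.
Proof.
by apply/matrixP => -[[|[|//]] ?] k;
  rewrite !mxE /M4_degrees /= modp_small ?Qsize ?size_polyXn // coefXn;
  case: k => -[|[|k]] ?.
Qed.

Lemma quartic_rem_mx_ur : ursubmx quartic_rem_mx = 0.
Proof.
by apply/matrixP => -[[|[|//]] ?] k;
  rewrite !mxE /M4_degrees /= modp_small ?Qsize ?size_polyXn // coefXn.
Qed.

Let quartic_corner_entries :
  let B := drsubmx quartic_rem_mx in
  [/\ B 0 0 = - Q`_2, B 0 1 = - Q`_3, B 1 0 = Q`_3 * Q`_2 - Q`_1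
     & B 1 1 = Q`_3 ^+ 2 - Q`_2].
Proof.
rewrite /= !mxE /M4_degrees /= modp_X4_quartic modp_X5_quartic.
rewrite mulrBl !coefB !coefXn !coefXM !coefCM /=.
by split; rewrite sub0r ?opprB ?expr2.
Qed.

Lemma det_quartic_corner : \det (drsubmx quartic_rem_mx) = Q`_2 ^+ 2 - Q`_1 * Q`_3.
Proof.
have [b00 b01 b10 b11] := quartic_corner_entries.
by rewrite det_mx22 b00 b01 b10 b11; ring.
Qed.

Lemma quartic_corner_neq0 x y : 2%N \in [pchar F] ->
  root Q x -> root Q y -> x != y -> drsubmx quartic_rem_mx != 0.
Proof.
move=> ch2 Qx Qy; apply: contraNneq => B0.
have [b00 b01 b10 _] := quartic_corner_entries; rewrite B0 !mxE in b00 b01 b10.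
have Q2 : Q`_2 = 0 by apply/eqP; rewrite -oppr_eq0 -b00.
have Q3 : Q`_3 = 0 by apply/eqP; rewrite -oppr_eq0 -b01.
have Q1 : Q`_1 = 0 by apply: oppr_inj; rewrite oppr0 [RHS]b10 Q3 mul0r sub0r.
have root_X4 z : root Q z -> z ^+ 4 = - Q`_0.
  move=> /quartic_root_X4 ->; rewrite big_ord_recl big1 ?addr0 ?mulr1 // => k _.
  by rewrite lift0; case: k => -[|[|[|//]]] ?; rewrite ?Q1 ?Q2 ?Q3 mul0r.
have X4_inj : injective (fun z : F => z ^+ 4).
  by move=> z t /= e; apply/(sqr_inj_pchar2 ch2)/(sqr_inj_pchar2 ch2); rewrite /= -!exprM.
by apply/eqP/X4_inj; rewrite /= !root_X4.
Qed.
End QuarticRemainder.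

Lemma M4_mul_diag (F : fieldType) (u : 'I_4 -> F) : (forall j, u j != 0) ->
  M4 u *m diag_mx (\row_j u j ^+ 5) = \matrix_(i, j) (u j ^+ 2) ^+ M4_degrees i.
Proof.
move=> u_neq0; apply/matrixP => i j.
rewrite mul_mx_diag !mxE -exprM exprnP -expfzDr //.
by case: i => -[|[|[|[|//]]]] ?; rewrite /exps /M4_degrees /= exprnP.
Qed.

Lemma mxrank_M4 (F : fieldType) (u : 'I_4 -> F) :
  (forall j, u j != 0) -> injective (fun j => u j ^+ 2) ->
  let Q := \prod_j ('X - (u j ^+ 2)%:P) in
  \rank (M4 u) = (2 + \rank (drsubmx (quartic_rem_mx Q)))%N.
Proof.
move=> u_neq0 sq_inj Q.
have Qmonic : Q \is monic by apply: monic_prod_XsubC.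
have Qsize : size Q = 5%N by apply: size_prod_XsubC_ord.
have D_free : row_free (diag_mx (\row_j u j ^+ 5)).
  rewrite row_free_unit unitmxE det_diag unitfE.
  by apply/prodf_neq0 => j _; rewrite mxE expf_neq0.
rewrite -(mxrankMfree _ D_free) M4_mul_diag //.
rewrite (pow_mx_rem_Vandermonde _ Qsize (root_prod_XsubC_ord _)).
rewrite mxrankMfree ?row_free_unit ?Vandermonde_unit //.
apply: (mxrank_block_unitriangular (A := quartic_rem_mx Q)).
  exact: quartic_rem_mx_ul.
exact: quartic_rem_mx_ur.
Qed.

Lemma det_quartic_corner_pchar2 (F : fieldType) (u : 'I_4 -> F) : 2%N \in [pchar F] ->
  let Q := \prod_j ('X - (u j ^+ 2)%:P) in
  \det (drsubmx (quartic_rem_mx Q)) = (elsym 2 u ^+ 2 + elsym 1 u * elsym 3 u) ^+ 2.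
Proof.
move=> ch2 Q.
have QE : Q = map_poly (pFrobenius_aut ch2) (\prod_j ('X - (u j)%:P)).
  by rewrite map_prod_XsubC; apply: eq_bigr => j _; rewrite /= pFrobenius_autE.
have Qcoef k : (k <= 4)%N -> Q`_k = ((-1) ^+ (4 - k) * elsym (4 - k) u) ^+ 2.
  by move=> le_k4; rewrite QE coef_map coef_prod_XsubC_elsym // pFrobenius_autE.
rewrite det_quartic_corner ?Qcoef //; last first.
- exact: size_prod_XsubC_ord.
- exact: monic_prod_XsubC.
move: (elsym 1 u) (elsym 2 u) (elsym 3 u) => s1 s2 s3.
transitivity ((s2 ^+ 2 + s1 * s3) ^+ 2 - 2%:R * (s1 * s2 ^+ 2 * s3 + s1 ^+ 2 * s3 ^+ 2)).
  by ring.
by rewrite pcharf0 // mul0r subr0.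
Qed.

Unset Implicit Arguments.

Theorem lemma17 (m : nat) (F : finFieldType) (u : 'I_4 -> F) :
  (0 < m)%N -> ~~ odd m ->
  #|F| = ((2 ^ m) ^ 2)%N ->
  injective u ->
  (forall j, u j ^+ (2 ^ m).+1 = 1) ->
  (\rank (M4 u) = 3%N <->
   elsym 2 u ^+ 2 + elsym 1 u * elsym 3 u = 0).
Proof.
(* The parity of m and u_j^(q+1) = 1 are only needed through char F = 2 and u_j <> 0. *)
move=> m_gt0 _ cardF u_inj u_unit.
have ch2 : 2%N \in [pchar F].
  by apply: (card_finPcharP (n := m * 2)) => //; rewrite cardF expnM.
have u_neq0 j : u j != 0.
  by apply: contra_eq_neq (u_unit j) => ->; rewrite expr0n eq_sym oner_neq0.
have sq_inj : injective (fun j => u j ^+ 2) := inj_comp (sqr_inj_pchar2 ch2) u_inj.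
set Q := \prod_j ('X - (u j ^+ 2)%:P).
have Qmonic : Q \is monic := monic_prod_XsubC _ _ _.
have Qsize : size Q = 5%N := size_prod_XsubC_ord _.
have corner_neq0 : drsubmx (quartic_rem_mx Q) != 0.
  apply: (quartic_corner_neq0 Qmonic Qsize ch2 (root_prod_XsubC_ord _ 0)
                               (root_prod_XsubC_ord _ 1)).
  by rewrite (inj_eq sq_inj).
rewrite mxrank_M4 // -/Q.
transitivity (\rank (drsubmx (quartic_rem_mx Q)) == 1%N).
  by split => [/addnI -> | /eqP ->].
rewrite mxrank22_eq1 corner_neq0 det_quartic_corner_pchar2 // sqrf_eq0.
by split => /eqP.
Qed.
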